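(* Suppose Assumptions 1–6 hold. Then (i) $m_n^{**}\to\infty$ as $n\to\infty$; (ii) $R_n(m_n^* )\to\infty$ and $R_n(\mathbf w_n^* )\to\infty$ as $n\to\infty$ (for any choice of $M_n$ with $2\le M_n\le q_n$).
   Context: Setting. For each sample size $n$ one observes $\mathbf y=\boldsymbol\mu+\boldsymbol\varepsilon\in\mathbb R^n$ with $\boldsymbol\mu=\mathbf X\boldsymbol\beta$, where $\mathbf X=(x_{ij})$ is a nonstochastic $n\times p_n$ matrix with $p_n<n$, $\boldsymbol\beta\in\mathbb R^{p_n}$, $E(\boldsymbol\varepsilon)=\mathbf 0$ and $\mathrm{Cov}(\boldsymbol\varepsilon)=\boldsymbol\Omega$ positive definite (all may depend on $n$). Fix integers $0=\nu_0<\nu_1<\cdots<\nu_{q_n}=p_n$. For $m=1,\dots,q_n$, $\mathbf X_m$ is the $n\times\nu_m$ matrix of the first $\nu_m$ columns of $\mathbf X$ (full column rank), $\mathbf P_m=\mathbf X_m(\mathbf X_m^\top\mathbf X_m)^{-1}\mathbf X_m^\top$, $\mathbf P_0=\mathbf 0$. Candidate models are $m\in\{1,\dots,M_n\}$, $2\le M_n\le q_n$. $R_n(m)=E\|\mathbf P_m\mathbf y-\boldsymbol\mu\|^2$; for $\mathbf w\in\mathbb R^{M_n}$, $R_n(\mathbf w)=E\|\sum_{m=1}^{M_n}w_m\mathbf P_m\mathbf y-\boldsymbol\mu\|^2$. $\mathcal W_n=\{\mathbf w\in[0,1]^{M_n}:\sum_m w_m=1\}$. $m_n^*$ minimizes $R_n(m)$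 over $\{1,\dots,M_n\}$, $m_n^{**}$ minimizes $R_n(m)$ over $\{1,\dots,q_n\}$, $\mathbf w_n^*$ minimizes $R_n(\mathbf w)$ over $\mathcal W_n$ (all assumed unique). $\theta_{n,m}=\dfrac{n^{-1}\boldsymbol\mu^\top(\mathbf P_m-\mathbf P_{m-1})\boldsymbol\mu}{\mathrm{tr}\{(\mathbf P_m-\mathbf P_{m-1})\boldsymbol\Omega\}}$ for $m=1,\dots,q_n$, and $d_n=\max\{m:\theta_{n,m}>0\}$. Assumption 1: $\|\boldsymbol\mu\|^2/n=O(1)$. Assumption 2: constants $0<c_1\le c_2<\infty$ with $c_1<\lambda_{\min}(\boldsymbol\Omega)\le\lambda_{\max}(\boldsymbol\Omega)<c_2$. Assumption 3: for each sufficiently large $n$, $\theta_{n,1}\ge\cdots\ge\theta_{n,q_n}$. Assumption 4: there is a constant $V\ge1$ with $\max_{1\le m\le d_n}(\nu_m-\nu_{m-1})\le V$ for all large $n$. Assumption 5: for every fixed positive integer $m$ there are constants $\bar\theta_m>0$ and $K_m>0$ such that for all $n\ge K_m$, $m\le d_n$ and $\theta_{n,m}\ge\bar\theta_m$. Assumption 6: for each sufficiently large $n$ there is $m_n'\in\{1,\dots,d_n-1\}$ with $R_n(m)<R_n(m-1)$ for $2\le m\le m_n'$, $R_n(m)\ge R_n(m-1)$ for $m_n'<m\le d_n$, and $R_n(d_n)>R_n(d_n-1)$. *)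

From HB Require Import structures.
From mathcomp Require Import all_boot all_order all_algebra.
From mathcomp Require Import reals.
Set Implicit Arguments. Unset Strict Implicit. Unset Printing Implicit Defensive.
Import Order.TTheory GRing.Theory Num.Theory.
Local Open Scope ring_scope.

Section ModelAveraging.
Variable R : realType.

(* selection matrix: X *m sel p k = first k columns of X (when k <= p) *)
Definition sel (p k : nat) : 'M[R]_(p, k) :=
  \matrix_(i < p, j < k) (((i : nat) == (j : nat)) %:R).

Definition firstcols (n p : nat) (X : 'M[R]_(n, p)) (k : nat) : 'M[R]_(n, k) :=
  X *m sel p k.

(* hat / projection matrix X_k (X_k^T X_k)^{-1} X_k^T ; equals 0 for k = 0 *)
Definition proj (n p : nat) (X : 'M[R]_(n, p)) (k : nat) : 'M[R]_n :=
  let Xk := firstcols X k in Xk *m invmx (Xk^T *m Xk) *m Xk^T.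

Definition sqnorm (n : nat) (v : 'cV[R]_n) : R := \sum_(i < n) (v i 0) ^+ 2.

(* E || A y - mu ||^2 for y = mu + eps, E eps = 0, Cov eps = Om *)
Definition risk (n : nat) (mu : 'cV[R]_n) (Om : 'M[R]_n) (A : 'M[R]_n) : R :=
  sqnorm ((A - 1%:M) *m mu) + \tr (A *m Om *m A^T).

Definition risk_m (n p : nat) (X : 'M[R]_(n, p)) (beta : 'cV[R]_p) (Om : 'M[R]_n)
  (nu : nat -> nat) (m : nat) : R :=
  risk (X *m beta) Om (proj X (nu m)).

(* R_n(w), w : 'rV_M, coordinate i <-> model i+1 *)
Definition risk_w (n p : nat) (X : 'M[R]_(n, p)) (beta : 'cV[R]_p) (Om : 'M[R]_n)
  (nu : nat -> nat) (M : nat) (w : 'rV[R]_M) : R :=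
  risk (X *m beta) Om (\sum_(i < M) w 0 i *: proj X (nu i.+1)).

Definition simplexW (M : nat) (w : 'rV[R]_M) : Prop :=
  (forall i : 'I_M, 0 <= w 0 i <= 1) /\ \sum_(i < M) w 0 i = 1.

Definition theta (n p : nat) (X : 'M[R]_(n, p)) (beta : 'cV[R]_p) (Om : 'M[R]_n)
  (nu : nat -> nat) (m : nat) : R :=
  let mu := X *m beta in
  let D := proj X (nu m) - proj X (nu m.-1) in
  (n%:R^-1 * (mu^T *m D *m mu) 0 0) / \tr (D *m Om).

(* d_n = max { m in 1..q : theta_{n,m} > 0 } (0 if empty) *)
Definition dn (n p : nat) (X : 'M[R]_(n, p)) (beta : 'cV[R]_p) (Om : 'M[R]_n)
  (nu : nat -> nat) (q : nat) : nat :=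
  \max_(m < q.+1 | (0 < (m : nat))%N && (0 < theta X beta Om nu m)) (m : nat).

Definition posdef (n : nat) (A : 'M[R]_n) : Prop :=
  A^T = A /\ forall x : 'cV[R]_n, x != 0 -> 0 < (x^T *m A *m x) 0 0.

(* c1 < lambda_min(A) <= lambda_max(A) < c2 : every (real) eigenvalue of the
   symmetric matrix A lies in the open interval (c1, c2) *)
Definition eig_between (n : nat) (A : 'M[R]_n) (c1 c2 : R) : Prop :=
  forall a : R, eigenvalue A a -> c1 < a < c2.

End ModelAveraging.

From HB Require Import structures.
From mathcomp Require Import all_boot all_order all_algebra.
From mathcomp Require Import reals complex.
From mathcomp Require Import ring lra.
Import Order.TTheory GRing.Theory Num.Theory.
Local Open Scope ring_scope.

(* R_n(m) is the bias |(I - P_m) mu|^2 plus the variance tr(P_m Om P_m), and the increments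
   D_m = P_m - P_{m-1} are orthogonal projections with mu^T D_m mu = n theta_m tr(D_m Om) and
   tr(D_m Om) >= c1, where c1 bounds the spectrum of Om from below.  Hence
   R_n(m) - R_n(m-1) = tr(D_m Om) (1 - n theta_m), which is negative as soon as n theta_m > 1;
   by Assumptions 3 and 5 this eventually holds for every m up to any fixed K, so the risk
   minimiser escapes every bound.  For (ii), fix K.  Any average A = sum_i w_i P_i acts on the
   range of D_j as a scalar a_j, with a_j >= a_K for j <= K, so its bias is at least
   (1 - a_K)^2 mu^T D_K mu >= (1 - a_K)^2 n theta_K c1 and its variance at least c1 K a_K^2.
   Taking K and then n large makes both coefficients at least 2B, and
   u a^2 + v (1 - a)^2 >= B whenever u, v >= 2B. *)

Set Implicit Arguments.
Unset Strict Implicit.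
Unset Printing Implicit Defensive.

Definition qform (R : pzRingType) n (A : 'M[R]_n) (x : 'cV[R]_n) : R :=
  (x^T *m A *m x) 0 0.

Definition orthoproj (R : pzRingType) n (E : 'M[R]_n) := E^T = E /\ E *m E = E.

Definition hatmx (R : fieldType) m n (Y : 'M[R]_(m, n)) : 'M[R]_m :=
  Y *m invmx (Y^T *m Y) *m Y^T.

Section SpectralBound.
Local Open Scope sesquilinear_scope.

Lemma normalmx_spectral_eigenvalue (C : numClosedFieldType) n (A : 'M[C]_n) k :
  A \is normalmx -> eigenvalue A (spectral_diag A 0 k).
Proof.
move=> /orthomx_spectralP A_eq; set P := spectralmx A in A_eq *.
have P_unit : P \in unitmx by exact: spectral_unit.
apply/eigenvalueP; exists (row k P).
  rewrite {1}A_eq !mulmxA -row_mul mulmxV // row1.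
  by rewrite -rowE row_diag_mx -scalemxAl -rowE.
apply/eqP => /(congr1 (mulmx^~ (invmx P))).
rewrite mul0mx -row_mul mulmxV // row1 => /rowP/(_ k).
by rewrite !mxE !eqxx => /eqP; rewrite oner_eq0.
Qed.

Lemma normalmx_quad_ge (C : numClosedFieldType) n (A : 'M[C]_n) (c : C)
    (u : 'rV[C]_n) :
  A \is normalmx -> (forall k, c <= spectral_diag A 0 k) ->
  c * (u *m u^t*) 0 0 <= (u *m A *m u^t*) 0 0.
Proof.
move=> /orthomx_spectralP A_eq c_le.
set P := spectralmx A in A_eq; set d := spectral_diag A in A_eq c_le.
have P_inv : invmx P = P^t* by rewrite invmx_unitary // spectral_unitarymx.
have PtP : P^t* *m P = 1%:M by rewrite -P_inv mulVmx // spectral_unit.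
set y := u *m P^t*.
have yC : y^t* = P *m u^t* by rewrite /y trmx_mul map_mxM trmxCK.
have -> : u *m A *m u^t* = y *m diag_mx d *m y^t*.
  by rewrite yC A_eq P_inv !mulmxA.
have -> : u *m u^t* = y *m y^t*.
  by rewrite yC mulmxA -(mulmxA u) PtP mulmx1.
rewrite mul_mx_diag !mxE mulr_sumr; apply: ler_sum => k _; rewrite !mxE.
rewrite mulrAC [X in X <= _]mulrC; apply: ler_wpM2l => //.
by rewrite mul_conjC_ge0.
Qed.

Section RealSymmetric.
Variable R : rcfType.
Local Notation toC := (real_complex R).

Lemma symmx_quad_ge n (A : 'M[R]_n) (c : R) (x : 'cV[R]_n) :
  A^T = A -> (forall a, eigenvalue A a -> c <= a) -> c * (x^T *m x) 0 0 <= qform A x.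
Proof.
move=> AT c_le.
have conj_toC m k (B : 'M[R]_(m, k)) : map_mx Num.conj (map_mx toC B) = map_mx toC B.
  by apply/matrixP => i j; rewrite !mxE; apply/CrealP/complex_realP; exists (B i j).
have A_herm : map_mx toC A \is hermsymmx.
  by apply/is_hermitianmxP; rewrite expr0 scale1r map_trmx conj_toC AT.
have c_le_d k : toC c <= spectral_diag (map_mx toC A) 0 k.
  have /mxOverP/(_ 0 k)/complex_realP[r d_eq] :=
    hermitian_spectral_diag_real A_herm.
  rewrite d_eq lecR; apply: c_le.
  have := normalmx_spectral_eigenvalue k (hermitian_normalmx A_herm).
  by rewrite d_eq eigenvalue_map.
have := normalmx_quad_ge (map_mx toC x^T) (hermitian_normalmx A_herm) c_le_d.
by rewrite map_trmx trmxK conj_toC -!map_mxM ![map_mx _ _ 0 0]mxE -rmorphM lecR.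
Qed.
End RealSymmetric.

End SpectralBound.

Section Projections.
Variable R : realType.
Implicit Types (c a : R) (n : nat).

Lemma sqnormE n (x : 'cV[R]_n) : sqnorm x = (x^T *m x) 0 0.
Proof. by rewrite !mxE; apply: eq_bigr => i _; rewrite !mxE expr2. Qed.

Lemma sqnorm_ge0 n (x : 'cV[R]_n) : 0 <= sqnorm x.
Proof. by apply: sumr_ge0 => i _; rewrite sqr_ge0. Qed.

Lemma qform1 n (x : 'cV[R]_n) : qform 1%:M x = sqnorm x.
Proof. by rewrite /qform mulmx1 sqnormE. Qed.

Lemma qformB n (A B : 'M[R]_n) x : qform (A - B) x = qform A x - qform B x.
Proof. by rewrite /qform mulmxBr mulmxBl !mxE. Qed.

Lemma sqnormZ n a (x : 'cV[R]_n) : sqnorm (a *: x) = a ^+ 2 * sqnorm x.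
Proof. by rewrite /sqnorm mulr_sumr; apply: eq_bigr => i _; rewrite mxE exprMn. Qed.

Lemma sqnormN n (x : 'cV[R]_n) : sqnorm (- x) = sqnorm x.
Proof. by rewrite -scaleN1r sqnormZ sqrrN expr1n mul1r. Qed.

Lemma sqnorm_eq0 n (x : 'cV[R]_n) : sqnorm x = 0 -> x = 0.
Proof.
move/eqP; rewrite psumr_eq0 => [/allP x0|i _]; last by rewrite sqr_ge0.
apply/colP => i; rewrite mxE; apply/eqP; rewrite -sqrf_eq0.
exact: (implyP (x0 i (mem_index_enum i))).
Qed.

Lemma mxtrace_mul_trmx m n (B : 'M[R]_(m, n)) (Om : 'M[R]_n) :
  \tr (B *m Om *m B^T) = \sum_i qform Om (row i B)^T.
Proof.
apply: eq_bigr => i _; rewrite /qform trmxK !mxE; apply: eq_bigr => l _.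
by rewrite !mxE; congr (_ * _); apply: eq_bigr => t _; rewrite !mxE.
Qed.

Lemma mxtrace_mul_trmx_ge0 m n (B : 'M[R]_(m, n)) : 0 <= \tr (B *m B^T).
Proof.
rewrite -{1}[B]mulmx1 mxtrace_mul_trmx sumr_ge0 // => i _.
by rewrite qform1 sqnorm_ge0.
Qed.

Lemma mxtrace_mul_trmx_ge m n (B : 'M[R]_(m, n)) (Om : 'M[R]_n) c :
  (forall x, c * sqnorm x <= qform Om x) ->
  c * \tr (B *m B^T) <= \tr (B *m Om *m B^T).
Proof.
move=> Om_ge; rewrite -{1}[B]mulmx1 !mxtrace_mul_trmx mulr_sumr.
by apply: ler_sum => i _; rewrite qform1.
Qed.

Lemma orthoproj0 n : orthoproj (0 : 'M[R]_n).
Proof. by split; rewrite ?trmx0 ?mul0mx. Qed.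

Lemma orthoprojC n (E : 'M[R]_n) : orthoproj E -> orthoproj (1%:M - E).
Proof.
case=> ET EE; split; first by rewrite linearB /= trmx1 ET.
by rewrite mulmxBl !mulmxBr EE !mul1mx mulmx1 subrr subr0.
Qed.

Lemma orthoprojB n (E F : 'M[R]_n) :
  orthoproj E -> orthoproj F -> F *m E = E -> orthoproj (F - E).
Proof.
move=> [ET EE] [FT FF] FE; have EF : E *m F = E.
  by rewrite -[LHS]trmxK trmx_mul ET FT FE ET.
split; first by rewrite linearB /= ET FT.
by rewrite mulmxBl !mulmxBr EE FF FE EF subrr subr0.
Qed.

Lemma orthoproj_qform n (E : 'M[R]_n) x : orthoproj E -> qform E x = sqnorm (E *m x).
Proof.
by case=> ET EE; rewrite sqnormE /qform trmx_mul ET mulmxA -(mulmxA x^T E E) EE.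
Qed.

Lemma sqnorm_orthoproj_le n (E : 'M[R]_n) x : orthoproj E -> sqnorm (E *m x) <= sqnorm x.
Proof.
move=> E_proj; rewrite -orthoproj_qform // -qform1 -subr_ge0 -qformB.
by rewrite orthoproj_qform ?sqnorm_ge0 //; apply: orthoprojC.
Qed.

Lemma mxtrace_conj_orthoproj m n (E : 'M[R]_n) (B : 'M[R]_(m, n)) : orthoproj E ->
  \tr (B *m E *m B^T) = \tr ((B *m E) *m (B *m E)^T).
Proof. by case=> ET EE; rewrite trmx_mul ET !mulmxA -(mulmxA B E E) EE. Qed.

Lemma mxtrace_orthoproj_conj n (E Om : 'M[R]_n) : orthoproj E ->
  \tr (E *m Om *m E^T) = \tr (E *m Om).
Proof. by case=> ET EE; rewrite ET mxtrace_mulC mulmxA EE. Qed.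

Lemma mxtrace_orthoproj_ge n (E Om : 'M[R]_n) c :
  orthoproj E -> 0 <= c -> (forall x, c * sqnorm x <= qform Om x) ->
  c * \tr E <= \tr (E *m Om).
Proof.
move=> E_proj c_ge0 Om_ge; rewrite -mxtrace_orthoproj_conj //.
by apply: le_trans (mxtrace_mul_trmx_ge E Om_ge); case: E_proj => -> ->.
Qed.

Lemma risk_orthoproj n (mu : 'cV[R]_n) (Om E : 'M[R]_n) : orthoproj E ->
  risk mu Om E = sqnorm mu - qform E mu + \tr (E *m Om).
Proof.
move=> E_proj; rewrite /risk mxtrace_orthoproj_conj // -opprB mulNmx sqnormN.
rewrite -orthoproj_qform ?qformB ?qform1 //; exact: orthoprojC.
Qed.

Lemma gram_unitmx m n (Y : 'M[R]_(m, n)) : \rank Y = n -> Y^T *m Y \in unitmx.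
Proof.
move=> rkY; rewrite -row_free_unit -kermx_eq0; apply/eqP/row_matrixP => i.
rewrite row0; set u := row i _.
have uG : u *m (Y^T *m Y) = 0 by rewrite /u -row_mul mulmx_ker row0.
have : sqnorm (Y *m u^T) = 0.
  by rewrite sqnormE trmx_mul trmxK mulmxA -(mulmxA u) uG mul0mx mxE.
move/sqnorm_eq0/(congr1 trmx); rewrite trmx_mul trmxK trmx0 => /eqP.
have Yt_free : row_free Y^T by rewrite /row_free mxrank_tr rkY.
by rewrite mulmx_free_eq0 // => /eqP.
Qed.

Lemma hatmx_mulmx m n (Y : 'M[R]_(m, n)) : \rank Y = n -> hatmx Y *m Y = Y.
Proof. by move=> rkY; rewrite /hatmx -!mulmxA mulVmx ?gram_unitmx // mulmx1. Qed.

Lemma hatmx_orthoproj m n (Y : 'M[R]_(m, n)) : \rank Y = n -> orthoproj (hatmx Y).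
Proof.
move=> rkY; split; first by rewrite !trmx_mul trmxK trmx_inv trmx_mul trmxK mulmxA.
by rewrite {2}/hatmx !mulmxA hatmx_mulmx.
Qed.

Lemma mxtrace_hatmx m n (Y : 'M[R]_(m, n)) : \rank Y = n -> \tr (hatmx Y) = n%:R.
Proof.
move=> rkY; rewrite /hatmx -mulmxA mxtrace_mulC -mulmxA mulVmx ?gram_unitmx //.
exact: mxtrace1.
Qed.

Lemma hatmx_mul_hatmx m n k (Y : 'M[R]_(m, n)) (S : 'M[R]_(n, k)) :
  \rank Y = n -> hatmx Y *m hatmx (Y *m S) = hatmx (Y *m S).
Proof. by move=> rkY; rewrite {2 3}/hatmx !mulmxA hatmx_mulmx. Qed.

Lemma mul_sel p k j : (j <= k)%N -> sel R p k *m sel R k j = sel R p j.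
Proof.
move=> jk; apply/matrixP => i l; rewrite !mxE.
have lk : (l < k)%N by apply: leq_trans (ltn_ord l) jk.
rewrite (bigD1 (Ordinal lk)) //= !mxE eqxx mulr1 big1 ?addr0 // => t.
by rewrite -val_eqE /= => /negbTE tl; rewrite !mxE tl mulr0.
Qed.

Section FirstColumns.
Variables (n p : nat) (X : 'M[R]_(n, p)).

Lemma projE k : proj X k = hatmx (firstcols X k).
Proof. by []. Qed.

Lemma proj0 : proj X 0 = 0.
Proof. by rewrite /proj thinmx0 !mul0mx. Qed.

Lemma firstcols_sel j k : (j <= k)%N -> firstcols X j = firstcols X k *m sel R k j.
Proof. by move=> jk; rewrite /firstcols -mulmxA mul_sel. Qed.

Lemma proj_mul_proj j k : (j <= k)%N -> \rank (firstcols X k) = k ->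
  proj X k *m proj X j = proj X j.
Proof.
by move=> jk rk; rewrite !projE (firstcols_sel jk) hatmx_mul_hatmx.
Qed.

End FirstColumns.

Lemma mxtrace_conj_orthoproj_le m n (A : 'M[R]_(m, n)) (E : 'M[R]_n) :
  orthoproj E -> \tr (A *m E *m A^T) <= \tr (A *m A^T).
Proof.
move=> E_proj; have -> : A *m A^T = A *m E *m A^T + A *m (1%:M - E) *m A^T.
  by rewrite -mulmxDl -mulmxDr addrC subrK mulmx1.
rewrite linearD /= lerDl mxtrace_conj_orthoproj ?mxtrace_mul_trmx_ge0 //.
exact: orthoprojC.
Qed.

Lemma mxtrace_conj_orthoproj_eigen n (A E : 'M[R]_n) a :
  orthoproj E -> A *m E = a *: E -> \tr (A *m E *m A^T) = a ^+ 2 * \tr E.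
Proof.
move=> E_proj AE; rewrite mxtrace_conj_orthoproj // AE.
rewrite linearZ /= -scalemxAl -scalemxAr !linearZ /= mulrA -expr2.
by case: E_proj => -> ->.
Qed.

Lemma sqnorm_bias_ge n (mu : 'cV[R]_n) (A E : 'M[R]_n) a :
  A^T = A -> orthoproj E -> A *m E = a *: E ->
  (1 - a) ^+ 2 * qform E mu <= sqnorm ((A - 1%:M) *m mu).
Proof.
move=> AT E_proj AE; apply: le_trans (sqnorm_orthoproj_le _ E_proj).
have EA : E *m A = a *: E.
  by case: E_proj => ET _; rewrite -[LHS]trmxK trmx_mul AT ET AE linearZ /= ET.
rewrite mulmxA mulmxBr EA mulmx1 -{3}[E]scale1r -scalerBl -scalemxAl sqnormZ.
by rewrite -orthoproj_qform // -sqrrN opprB.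
Qed.

Lemma risk_ge_bias_var n K (mu : 'cV[R]_n) (Om A Q : 'M[R]_n)
    (D : nat -> 'M[R]_n) (a : nat -> R) c :
  (1 <= K)%N -> 0 <= c -> (forall x, c * sqnorm x <= qform Om x) ->
  A^T = A -> orthoproj Q -> Q = \sum_(1 <= j < K.+1) D j ->
  (forall j, (1 <= j <= K)%N -> [/\ orthoproj (D j), 1 <= \tr (D j),
     A *m D j = a j *: D j & 0 <= a K <= a j]) ->
  c * K%:R * a K ^+ 2 + (1 - a K) ^+ 2 * qform (D K) mu <= risk mu Om A.
Proof.
move=> K_ge1 c_ge0 Om_ge AT Q_proj QE HD.
have /HD[DK_proj _ ADK _] : (1 <= K <= K)%N by rewrite K_ge1 leqnn.
rewrite /risk addrC; apply: lerD; first exact: sqnorm_bias_ge AT DK_proj ADK.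
apply: le_trans (mxtrace_mul_trmx_ge A Om_ge); rewrite -mulrA ler_wpM2l //.
apply: le_trans (mxtrace_conj_orthoproj_le A Q_proj).
rewrite QE mulmx_sumr mulmx_suml linear_sum /=.
have -> : K%:R * a K ^+ 2 = \sum_(1 <= j < K.+1) a K ^+ 2.
  by rewrite sumr_const_nat subn1 mulr_natl.
apply: ler_sum_nat => j /andP[j1 jK]; rewrite ltnS in jK.
have /HD[Dj_proj trDj ADj /andP[aK_ge0 aKj]] : (1 <= j <= K)%N by rewrite j1 jK.
rewrite (mxtrace_conj_orthoproj_eigen Dj_proj ADj); nra.
Qed.

End Projections.

Section NestedModels.
Variables (R : realType) (n p q : nat) (X : 'M[R]_(n, p)) (nu : nat -> nat).
Hypothesis nu0 : nu 0%N = 0%N.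
Hypothesis nu_incr : forall m, (m < q)%N -> (nu m < nu m.+1)%N.
Hypothesis rank_X : forall m, (1 <= m <= q)%N -> \rank (firstcols X (nu m)) = nu m.

Local Notation P m := (proj X (nu m)).
Local Notation D m := (P m - P m.-1).

Lemma nu_homo : {in [pred i | (i <= q)%N] &, {homo nu : i j / (i <= j)%N}}.
Proof.
apply: (@homo_leq_in _ _ nu leq) => //; first exact: leq_trans.
  by move=> i j _ jq k /andP[_ /ltnW kj]; apply: leq_trans kj jq.
by move=> i _ /= iq; apply/ltnW/nu_incr.
Qed.

Lemma proj_nu_orthoproj m : (m <= q)%N -> orthoproj (P m).
Proof.
case: m => [|m] mq; first by rewrite nu0 proj0; apply: orthoproj0.
by rewrite projE; apply/hatmx_orthoproj/rank_X.
Qed.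

Lemma mxtrace_proj_nu m : (m <= q)%N -> \tr (P m) = (nu m)%:R.
Proof.
case: m => [|m] mq; first by rewrite nu0 proj0 linear0.
by rewrite projE; apply/mxtrace_hatmx/rank_X.
Qed.

Lemma proj_nu_nested i j : (i <= j <= q)%N -> P j *m P i = P i.
Proof.
case: j => [|j] /andP[ij jq].
  by move: ij; rewrite leqn0 => /eqP->; rewrite nu0 proj0 mul0mx.
apply: proj_mul_proj; last exact: rank_X.
by apply: nu_homo; rewrite ?inE //; apply: leq_trans ij jq.
Qed.

Lemma proj_nu_nestedT i j : (i <= j <= q)%N -> P i *m P j = P i.
Proof.
move=> ijq; have /andP[ij jq] := ijq.
have [[PiT _] [PjT _]] := (proj_nu_orthoproj (leq_trans ij jq), proj_nu_orthoproj jq).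
by rewrite -[LHS]trmxK trmx_mul PiT PjT proj_nu_nested.
Qed.

Lemma projD_orthoproj m : (1 <= m <= q)%N -> orthoproj (D m).
Proof.
case: m => [//|m] /= mq.
apply: orthoprojB; [exact/proj_nu_orthoproj/ltnW | exact: proj_nu_orthoproj |].
by apply: proj_nu_nested; rewrite leqnSn.
Qed.

Lemma mxtrace_projD_ge1 m : (1 <= m <= q)%N -> 1 <= \tr (D m).
Proof.
case: m => [//|m] /= mq.
rewrite linearB /= !mxtrace_proj_nu ?(ltnW mq) // -natrB ?ler1n ?subn_gt0 ?nu_incr //.
exact/ltnW/nu_incr.
Qed.

Lemma proj_mul_projD m j : (m <= q)%N -> (1 <= j <= q)%N ->
  P m *m D j = if (j <= m)%N then D j else 0.
Proof.
case: j => [//|j] mq /= jq; rewrite mulmxBr; case: ifP => jm.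
  by rewrite !proj_nu_nested ?mq ?andbT // ltnW.
have mj : (m <= j)%N by rewrite leqNgt jm.
by rewrite !proj_nu_nestedT ?subrr // ?(leqW mj) ?mj ?jq ?(ltnW jq).
Qed.

Lemma proj_sum_projD K : (K <= q)%N -> P K = \sum_(1 <= j < K.+1) D j.
Proof.
elim: K => [|K IH] Kq; first by rewrite big_geq // nu0 proj0.
by rewrite big_nat_recr //= -IH ?(ltnW Kq) // addrC subrK.
Qed.

Lemma risk_proj_nu_succ (mu : 'cV[R]_n) (Om : 'M[R]_n) m : (1 <= m <= q)%N ->
  risk mu Om (P m) = risk mu Om (P m.-1) - qform (D m) mu + \tr (D m *m Om).
Proof.
case: m => [//|m] /= mq.
have [Pm_proj PSm_proj] := (proj_nu_orthoproj (ltnW mq), proj_nu_orthoproj mq).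
rewrite !risk_orthoproj // qformB mulmxBl linearB /=; lra.
Qed.

Lemma risk_proj_nu_ge (mu : 'cV[R]_n) (Om : 'M[R]_n) c K m :
  (1 <= K <= q)%N -> (m <= q)%N -> 0 <= c ->
  (forall x, c * sqnorm x <= qform Om x) ->
  exists2 a, 0 <= a &
    c * K%:R * a ^+ 2 + (1 - a) ^+ 2 * qform (D K) mu <= risk mu Om (P m).
Proof.
move=> /andP[K_ge1 Kq] mq c_ge0 Om_ge; pose a j : R := (j <= m)%N%:R.
exists (a K) => //; apply: (risk_ge_bias_var mu (D := fun j => D j) K_ge1 c_ge0 Om_ge _ _
         (proj_sum_projD Kq)).
- by have [] := proj_nu_orthoproj mq.
- exact: proj_nu_orthoproj.
move=> j /andP[j_ge1 jK]; have jq : (1 <= j <= q)%N by rewrite j_ge1 (leq_trans jK Kq).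
split; [exact: projD_orthoproj | exact: mxtrace_projD_ge1 | |].
  by rewrite proj_mul_projD // /a; case: ifP; rewrite ?scale1r ?scale0r.
rewrite /a ler0n ler_nat /=; case: (leqP K m) => // Km.
by rewrite (leq_trans jK Km).
Qed.

Lemma risk_avg_ge (mu : 'cV[R]_n) (Om : 'M[R]_n) c K M (w : 'rV[R]_M) :
  (M <= q)%N -> simplexW w -> (1 <= K <= q)%N -> 0 <= c ->
  (forall x, c * sqnorm x <= qform Om x) ->
  exists2 a, 0 <= a & c * K%:R * a ^+ 2 + (1 - a) ^+ 2 * qform (D K) mu
                        <= risk mu Om (\sum_(i < M) w 0 i *: P i.+1).
Proof.
move=> Mq [w01 _] /andP[K_ge1 Kq] c_ge0 Om_ge.
have w_ge0 i : 0 <= w 0 i by have /andP[] := w01 i.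
have iq (i : 'I_M) : (i.+1 <= q)%N by apply: leq_trans (ltn_ord i) Mq.
(* a j is the weight of the models that contain the j-th block of columns. *)
pose a j := \sum_(i < M) (if (j <= i.+1)%N then w 0 i else 0).
exists (a K); first by apply: sumr_ge0 => i _; case: ifP.
apply: (risk_ge_bias_var mu (D := fun j => D j) K_ge1 c_ge0 Om_ge _ _
         (proj_sum_projD Kq)).
- rewrite linear_sum; apply: eq_bigr => i _.
  by rewrite linearZ /=; have [-> _] := proj_nu_orthoproj (iq i).
- exact: proj_nu_orthoproj.
move=> j /andP[j_ge1 jK]; have jq : (1 <= j <= q)%N by rewrite j_ge1 (leq_trans jK Kq).
split; [exact: projD_orthoproj | exact: mxtrace_projD_ge1 | |].
  rewrite mulmx_suml scaler_suml; apply: eq_bigr => i _.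
  by rewrite -scalemxAl proj_mul_projD //; case: ifP; rewrite ?scaler0 ?scale0r.
rewrite sumr_ge0 /=; last by move=> i _; case: ifP.
apply: ler_sum => i _; case: ifP => Ki; first by rewrite (leq_trans jK Ki).
by case: ifP.
Qed.

End NestedModels.

Definition eventually (P : nat -> Prop) := exists N, forall n, (N <= n)%N -> P n.

Lemma eventually_geq N : eventually (fun n => (N <= n)%N).
Proof. by exists N. Qed.

Lemma eventually_and (P Q : nat -> Prop) :
  eventually P -> eventually Q -> eventually (fun n => P n /\ Q n).
Proof.
move=> [M PM] [N QN]; exists (maxn M N) => n.
by rewrite geq_max => /andP[/PM ? /QN ?].
Qed.

Lemma eventually_mono (P Q : nat -> Prop) :
  (forall n, P n -> Q n) -> eventually P -> eventually Q.
Proof. by move=> PQ [N PN]; exists N => n /PN /PQ. Qed.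

Lemma eventually_natr_ge (R : archiRealDomainType) (x : R) :
  eventually (fun n => x <= n%:R).
Proof.
exists (Num.Def.archi_bound `|x|) => n n_ge.
apply: le_trans (real_ler_norm (num_real x)) _.
apply: le_trans (ltW (archi_boundP (normr_ge0 x))) _.
by rewrite ler_nat.
Qed.

Lemma quad_interp_ge (R : realFieldType) (B u v a : R) :
  2 * B <= u -> 2 * B <= v -> 0 <= u -> 0 <= v ->
  B <= u * a ^+ 2 + (1 - a) ^+ 2 * v.
Proof.
move=> Bu Bv u_ge0 v_ge0; have a2_ge0 := sqr_ge0 a; have a1_ge0 := sqr_ge0 (1 - a).
have [B_le0|B_gt0] := lerP B 0; first by nra.
(* 2 (a^2 + (1 - a)^2) - 1 = (2 a - 1)^2 *)
have : 0 <= B * (2 * a - 1) ^+ 2 by rewrite mulr_ge0 ?sqr_ge0 ?ltW.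
nra.
Qed.

Lemma dn_le (R : realType) n p (X : 'M[R]_(n, p)) beta Om nu q :
  (dn X beta Om nu q <= q)%N.
Proof. by apply/bigmax_leqP => i _; rewrite -ltnS. Qed.

Section Asymptotics.
Variables (R : realType) (p q : nat -> nat) (nu : nat -> nat -> nat).
Variables (X : forall n, 'M[R]_(n, p n)) (beta : forall n, 'cV[R]_(p n)).
Variables (Om : forall n, 'M[R]_n) (N0 : nat) (c : R).
Hypothesis n_gt0 : forall n, (N0 <= n)%N -> (0 < n)%N.
Hypothesis nu0 : forall n, (N0 <= n)%N -> nu n 0%N = 0%N.
Hypothesis nu_incr :
  forall n, (N0 <= n)%N -> forall m, (m < q n)%N -> (nu n m < nu n m.+1)%N.
Hypothesis rank_X : forall n, (N0 <= n)%N ->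
  forall m, (1 <= m <= q n)%N -> \rank (firstcols (X n) (nu n m)) = nu n m.
Hypothesis c_gt0 : 0 < c.
Hypothesis Om_ge : forall n, (N0 <= n)%N -> forall x, c * sqnorm x <= qform (Om n) x.

Local Notation mu n := (X n *m beta n).
Local Notation th n := (theta (X n) (beta n) (Om n) (nu n)).
Local Notation d n := (dn (X n) (beta n) (Om n) (nu n) (q n)).
Local Notation D n m := (proj (X n) (nu n m) - proj (X n) (nu n m.-1)).
Local Notation Rn n := (risk_m (X n) (beta n) (Om n) (nu n)).

Lemma mxtrace_projD_Om_ge n m : (N0 <= n)%N -> (1 <= m <= q n)%N ->
  c <= \tr (D n m *m Om n).
Proof.
move=> hn mq; have D_proj := projD_orthoproj (nu0 hn) (nu_incr hn) (rank_X hn) mq.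
apply: le_trans (mxtrace_orthoproj_ge D_proj (ltW c_gt0) (Om_ge hn)).
rewrite ler_peMr ?(ltW c_gt0) //.
exact: (mxtrace_projD_ge1 (nu0 hn) (nu_incr hn) (rank_X hn)).
Qed.

Lemma qform_projD_theta n m : (N0 <= n)%N -> (1 <= m <= q n)%N ->
  qform (D n m) (mu n) = n%:R * th n m * \tr (D n m *m Om n).
Proof.
move=> hn mq; have T_gt0 := lt_le_trans c_gt0 (mxtrace_projD_Om_ge hn mq).
by rewrite /theta /= -mulrA divfK ?gt_eqF // mulVKf ?pnatr_eq0 -?lt0n ?n_gt0.
Qed.

Hypothesis theta_nonincr : forall n, (N0 <= n)%N ->
  forall m, (1 <= m)%N -> (m < q n)%N -> th n m.+1 <= th n m.
Hypothesis theta_ge : forall m, (0 < m)%N -> exists thb, 0 < thb /\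
  exists K, forall n, (K <= n)%N -> (m <= d n)%N /\ thb <= th n m.

Lemma theta_antitone n i j : (N0 <= n)%N -> (1 <= i <= j)%N -> (j <= q n)%N ->
  th n j <= th n i.
Proof.
move=> hn /andP[i_ge1 ij] jq.
apply: (@homo_leq_in _ [pred m | 1 <= m <= q n]%N _ (fun x y => y <= x)) => //.
- by move=> x y z /[swap]; apply: le_trans.
- move=> x y /andP[x_ge1 _] /andP[_ yq] z /andP[/ltnW xz zy].
  by rewrite inE (leq_trans x_ge1 xz) (leq_trans (ltnW zy) yq).
- by move=> x /andP[x_ge1 _] /andP[_ xq]; apply: theta_nonincr.
- by rewrite inE i_ge1 (leq_trans ij jq).
- by rewrite inE (leq_trans i_ge1 ij) jq.
Qed.

Lemma ntheta_eventually_ge K B : (0 < K)%N -> eventually (fun n =>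
  (K <= d n)%N /\ forall m, (1 <= m <= K)%N -> B <= n%:R * th n m).
Proof.
move=> K_gt0; have [thb [thb_gt0 [N thb_le]]] := theta_ge K_gt0.
apply: eventually_mono (eventually_and (eventually_geq (maxn N0 N))
                          (eventually_natr_ge (B / thb))).
move=> n []; rewrite geq_max => /andP[hn0 hN]; rewrite ler_pdivrMr // => Bn.
have [Kd thbK] := thb_le n hN; split => // m /andP[m_ge1 mK].
apply: le_trans Bn _; rewrite ler_wpM2l // (le_trans thbK) //.
by apply: (theta_antitone hn0); rewrite ?m_ge1 // (leq_trans Kd) ?dn_le.
Qed.

Lemma risk_m_succ_lt n m : (N0 <= n)%N -> (1 <= m <= q n)%N ->
  1 < n%:R * th n m -> Rn n m < Rn n m.-1.
Proof.
move=> hn mq ntheta_gt1.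
have T_gt0 := lt_le_trans c_gt0 (mxtrace_projD_Om_ge hn mq).
rewrite /risk_m (risk_proj_nu_succ (nu0 hn) (rank_X hn) _ _ mq).
rewrite qform_projD_theta //; nra.
Qed.

Lemma argmin_risk_m_unbounded (m_min : nat -> nat) :
  (forall n, (N0 <= n)%N -> (1 <= m_min n <= q n)%N /\
     forall m, (1 <= m <= q n)%N -> m <> m_min n ->
       Rn n (m_min n) < Rn n m) ->
  forall K, eventually (fun n => (K <= m_min n)%N).
Proof.
move=> m_min_spec K.
apply: eventually_mono (eventually_and (eventually_geq N0)
                          (ntheta_eventually_ge 2 (ltn0Sn K))).
move=> n [hn [Kd ntheta_ge2]]; have [_ m_minP] := m_min_spec n hn.
rewrite leqNgt; apply/negP => small; set s := m_min n in small m_minP.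
have Kq : (K < q n)%N := leq_trans Kd (dn_le _ _ _ _ _).
have sq : (1 <= s.+1 <= q n)%N by rewrite /= (leq_trans small) // ltnW.
have lt_succ : Rn n s.+1 < Rn n s.
  apply: risk_m_succ_lt => //; apply: lt_le_trans (ntheta_ge2 _ _); first by lra.
  by rewrite /= ltnW.
by have := lt_trans lt_succ (m_minP _ sq (nesym (n_Sn s))); rewrite ltxx.
Qed.

Lemma bias_var_eventually_ge B : eventually (fun n => (N0 <= n)%N /\
  exists2 K, (1 <= K <= q n)%N &
    forall a, B <= c * K%:R * a ^+ 2 + (1 - a) ^+ 2 * qform (D n K) (mu n)).
Proof.
have [K0 K0_ge] := eventually_natr_ge (2 * B / c).
have cK_ge : 2 * B <= c * K0.+1%:R.
  by rewrite [c * _]mulrC -ler_pdivrMr //; apply: K0_ge.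
have [thb [thb_gt0 [N thb_le]]] := theta_ge (ltn0Sn K0).
apply: eventually_mono (eventually_and (eventually_geq (maxn N0 N))
                          (eventually_natr_ge (2 * B / (thb * c)))).
move=> n []; rewrite geq_max ler_pdivrMr ?mulr_gt0 // => /andP[hn hN] n_ge.
have [Kd thbK] := thb_le n hN.
have Kq : (1 <= K0.+1 <= q n)%N by rewrite /= (leq_trans Kd) ?dn_le.
have D_proj := projD_orthoproj (nu0 hn) (nu_incr hn) (rank_X hn) Kq.
split=> //; exists K0.+1 => // a; apply: quad_interp_ge => //.
- rewrite qform_projD_theta //; apply: le_trans n_ge _; rewrite mulrA.
  apply: ler_pM; [by rewrite mulr_ge0 // ltW | exact: ltW | |].
    by rewrite ler_wpM2l.
  exact: mxtrace_projD_Om_ge.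
- by rewrite mulr_ge0 // ltW.
- by rewrite orthoproj_qform ?sqnorm_ge0.
Qed.

Lemma risk_m_unbounded (m : nat -> nat) :
  (forall n, (N0 <= n)%N -> (m n <= q n)%N) ->
  forall B, eventually (fun n => B <= Rn n (m n)).
Proof.
move=> mq B; apply: eventually_mono (bias_var_eventually_ge B).
move=> n [hn [K Kq bias_var_ge]].
have [a _] := risk_proj_nu_ge (nu0 hn) (nu_incr hn) (rank_X hn) (mu n) Kq (mq n hn)
  (ltW c_gt0) (Om_ge hn).
exact: le_trans.
Qed.

Lemma risk_w_unbounded (M : nat -> nat) (w : forall n, 'rV[R]_(M n)) :
  (forall n, (N0 <= n)%N -> (M n <= q n)%N /\ simplexW (w n)) ->
  forall B, eventually (fun n => B <= risk_w (X n) (beta n) (Om n) (nu n) (w n)).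
Proof.
move=> Mw B; apply: eventually_mono (bias_var_eventually_ge B).
move=> n [hn [K Kq bias_var_ge]]; have [Mq w_simplex] := Mw n hn.
have [a _] := risk_avg_ge (nu0 hn) (nu_incr hn) (rank_X hn) (mu n) Mq w_simplex Kq
  (ltW c_gt0) (Om_ge hn).
exact: le_trans.
Qed.

End Asymptotics.

Unset Implicit Arguments.

Theorem theorem2 (R : realType)
  (p q M : nat -> nat) (nu : nat -> nat -> nat)
  (X : forall n : nat, 'M[R]_(n, p n))
  (beta : forall n : nat, 'cV[R]_(p n))
  (Om : forall n : nat, 'M[R]_n)
  (mss ms : nat -> nat) (ws : forall n : nat, 'rV[R]_(M n))
  (N0 : nat)
  (* standing setting, for all sufficiently large n *)
  (Hsetting : forall n : nat, (N0 <= n)%N ->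
     (p n < n)%N /\
     nu n 0%N = 0%N /\
     (forall m : nat, (m < q n)%N -> (nu n m < nu n m.+1)%N) /\
     nu n (q n) = p n /\
     (forall m : nat, (1 <= m <= q n)%N ->
        \rank (firstcols (X n) (nu n m)) = nu n m) /\
     posdef (Om n) /\
     (2 <= M n <= q n)%N)
  (* m_n^{**}: the unique minimiser of R_n(m) over 1..q_n *)
  (Hmss : forall n : nat, (N0 <= n)%N ->
     (1 <= mss n <= q n)%N /\
     forall m : nat, (1 <= m <= q n)%N -> m <> mss n ->
       risk_m (X n) (beta n) (Om n) (nu n) (mss n)
         < risk_m (X n) (beta n) (Om n) (nu n) m)
  (* m_n^{*}: the unique minimiser of R_n(m) over 1..M_n *)
  (Hms : forall n : nat, (N0 <= n)%N ->
     (1 <= ms n <= M n)%N /\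
     forall m : nat, (1 <= m <= M n)%N -> m <> ms n ->
       risk_m (X n) (beta n) (Om n) (nu n) (ms n)
         < risk_m (X n) (beta n) (Om n) (nu n) m)
  (* w_n^{*}: the unique minimiser of R_n(w) over W_n *)
  (Hws : forall n : nat, (N0 <= n)%N ->
     simplexW (ws n) /\
     forall w : 'rV[R]_(M n), simplexW w -> w <> ws n ->
       risk_w (X n) (beta n) (Om n) (nu n) (ws n)
         < risk_w (X n) (beta n) (Om n) (nu n) w)
  (* Assumption 1 *)
  (A1 : exists C : R, forall n : nat, (N0 <= n)%N ->
     sqnorm (X n *m beta n) / n%:R <= C)
  (* Assumption 2 *)
  (A2 : exists c1 c2 : R, [/\ 0 < c1, c1 <= c2 &
     forall n : nat, (N0 <= n)%N -> eig_between (Om n) c1 c2])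
  (* Assumption 3 *)
  (A3 : forall n : nat, (N0 <= n)%N ->
     forall m : nat, (1 <= m)%N -> (m < q n)%N ->
       theta (X n) (beta n) (Om n) (nu n) m.+1
         <= theta (X n) (beta n) (Om n) (nu n) m)
  (* Assumption 4 *)
  (A4 : exists V : nat, (1 <= V)%N /\ forall n : nat, (N0 <= n)%N ->
     forall m : nat, (1 <= m <= dn (X n) (beta n) (Om n) (nu n) (q n))%N ->
       (nu n m - nu n m.-1 <= V)%N)
  (* Assumption 5 *)
  (A5 : forall m : nat, (0 < m)%N ->
     exists thb : R, 0 < thb /\ exists K : nat, forall n : nat, (K <= n)%N ->
       (m <= dn (X n) (beta n) (Om n) (nu n) (q n))%N /\
       thb <= theta (X n) (beta n) (Om n) (nu n) m)
  (* Assumption 6 *)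
  (A6 : forall n : nat, (N0 <= n)%N ->
     let d := dn (X n) (beta n) (Om n) (nu n) (q n) in
     let Rn := risk_m (X n) (beta n) (Om n) (nu n) in
     exists m' : nat, [/\ (1 <= m')%N, (m' <= d.-1)%N,
       (forall m : nat, (2 <= m <= m')%N -> Rn m < Rn m.-1),
       (forall m : nat, (m' < m <= d)%N -> Rn m.-1 <= Rn m) &
       Rn d.-1 < Rn d]) :
  (* (i) m_n^{**} -> oo *)
  (forall K : nat, exists N : nat, forall n : nat, (N <= n)%N -> (K <= mss n)%N)
  /\
  (* (ii) R_n(m_n^{*}) -> oo and R_n(w_n^{*}) -> oo *)
  (forall B : R, exists N : nat, forall n : nat, (N <= n)%N ->
     B <= risk_m (X n) (beta n) (Om n) (nu n) (ms n))
  /\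
  (forall B : R, exists N : nat, forall n : nat, (N <= n)%N ->
     B <= risk_w (X n) (beta n) (Om n) (nu n) (ws n)).
Proof.
have [c [c2 [c_gt0 _ Om_eig]]] := A2.
have n_gt0 n (hn : (N0 <= n)%N) : (0 < n)%N.
  by have [pn _] := Hsetting n hn; apply: leq_ltn_trans pn.
have nu0 n (hn : (N0 <= n)%N) := (Hsetting n hn).2.1.
have nu_incr n (hn : (N0 <= n)%N) := (Hsetting n hn).2.2.1.
have rank_X n (hn : (N0 <= n)%N) := (Hsetting n hn).2.2.2.2.1.
have Mq n (hn : (N0 <= n)%N) : (M n <= q n)%N.
  by have /andP[_ ->] := (Hsetting n hn).2.2.2.2.2.2.
have Om_ge n (hn : (N0 <= n)%N) x : c * sqnorm x <= qform (Om n) x.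
  have [OmT _] := (Hsetting n hn).2.2.2.2.2.1.
  by rewrite sqnormE; apply: symmx_quad_ge => // a /(Om_eig n hn)/andP[/ltW].
split; [|split].
- exact: (argmin_risk_m_unbounded n_gt0 nu0 nu_incr rank_X c_gt0 Om_ge A3 A5 Hmss).
- apply: (risk_m_unbounded n_gt0 nu0 nu_incr rank_X c_gt0 Om_ge A5) => n hn.
  by have [/andP[_ msM] _] := Hms n hn; apply: leq_trans msM (Mq n hn).
- apply: (risk_w_unbounded n_gt0 nu0 nu_incr rank_X c_gt0 Om_ge A5) => n hn.
  by split; [apply: Mq | case: (Hws n hn)].
Qed.
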